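(* Let $\omega_1$ and $\omega_2$ be symplectic forms on $\mathbb{R}^{2n}$ with matrix representations $\Omega_1$ and $\Omega_2$. Then $\omega_1$ and $\omega_2$ are $\omega_{\mathrm{std}}$-symplectomorphic only if there exists $\varphi \in \operatorname{Symp}(\mathbb{R}^{2n},\omega_{\mathrm{std}})$ such that for every $x \in \mathbb{R}^{2n}$, $\operatorname{Pf}(\Omega_1(\varphi(x))) = \operatorname{Pf}(\Omega_2(x))$ and $\operatorname{s}(\Omega_1(\varphi(x))) = \operatorname{s}(\Omega_2(x))$.
   Context: A 2-form on $\mathbb{R}^{2n}$ (coordinates $x_1,\dots,x_{2n}$) is $\omega = \sum_{i<j}\omega_{i,j}\,dx_i\wedge dx_j$ with functions $\omega_{i,j}:\mathbb{R}^{2n}\to\mathbb{R}$; its matrix representation $\Omega(x)$ is the skew-symmetric matrix with $\Omega(x)_{i,j} = \omega_{i,j}(x)$ for $i<j$. A symplectic form is a smooth, closed 2-form with $\det\Omega(x)\neq 0$ for all $x$. The standard symplectic form is $\omega_{\mathrm{std}} = \sum_{i=1}^n dx_{2i-1}\wedge dx_{2i}$. The pullback is $(\varphi^*\omega)(x)(v,w) = \omega(\varphi(x))(d\varphi_x v, d\varphi_x w)$. $\operatorname{Symp}(\mathbb{R}^{2n},\omega_{\mathrm{std}})$ is the set of diffeomorphisms $\varphi$ of $\mathbb{R}^{2n}$ with $\varphi^*\omega_{\mathrm{std}} = \omega_{\mathrm{std}}$. Symplectic forms $\omega_1,\omega_2$ are $\omega_{\mathrm{std}}$-symplectomorphic if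 there is $\varphi \in \operatorname{Symp}(\mathbb{R}^{2n},\omega_{\mathrm{std}})$ with $\varphi^*\omega_1 = \omega_2$. For a skew-symmetric $2n\times 2n$ matrix $A$, $\operatorname{Pf}(A) = \frac{1}{2^n n!}\sum_{\sigma\in S_{2n}}\operatorname{sgn}(\sigma)\prod_{i=1}^n A_{\sigma(2i-1),\sigma(2i)}$ (so that $\operatorname{Pf}(A)^2=\det A$), and the sum function is $\operatorname{s}(A) = \sum_{i=1}^n A_{2i-1,2i}$. *)

From HB Require Import structures.
From mathcomp Require Import all_boot all_order all_algebra all_fingroup.
From mathcomp Require Import all_classical all_reals topology normedtype derive.
Set Implicit Arguments. Unset Strict Implicit. Unset Printing Implicit Defensive.
Import Order.TTheory GRing.Theory Num.Theory.
Import numFieldNormedType.Exports.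
Local Open Scope ring_scope.

Section Defs.
Variables (R : realType) (n : nat).

Local Notation N := (n.*2).
Local Notation pt := 'rV[R]_N.

Definition ebase (k : 'I_N) : pt := delta_mx 0 k.

Definition partial (k : 'I_N) (f : pt -> R) : pt -> R :=
  fun x => derive f x (ebase k).

Fixpoint iter_partial (s : seq 'I_N) (f : pt -> R) : pt -> R :=
  match s with
  | [::] => f
  | k :: s' => partial k (iter_partial s' f)
  end.

Definition smooth_fun (f : pt -> R) : Prop :=
  forall s : seq 'I_N,
    continuous (iter_partial s f) /\
    forall (k : 'I_N) (x : pt), derivable (iter_partial s f) x (ebase k).

Definition smooth_map (phi : pt -> pt) : Prop :=
  forall i : 'I_N, smooth_fun (fun x => phi x 0 i).

Definition diffeomorphism (phi : pt -> pt) : Prop :=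
  smooth_map phi /\
  exists psi : pt -> pt, [/\ cancel phi psi, cancel psi phi & smooth_map psi].

Definition jacobian (phi : pt -> pt) (x : pt) : 'M[R]_N :=
  \matrix_(i, j) partial j (fun y => phi y 0 i) x.

(* A 2-form sum_{i<j} w_{ij} dx_i /\ dx_j is represented by its skew-symmetric
   matrix function Omega, with Omega(x)_{ij} = w_{ij}(x) for i<j, so that
   w(x)(v,w) = v^T Omega(x) w. *)
Definition two_form := pt -> 'M[R]_N.

Definition skew_form (Om : two_form) : Prop := forall x, (Om x)^T = - Om x.

Definition smooth_form (Om : two_form) : Prop :=
  forall i j : 'I_N, (i < j)%N -> smooth_fun (fun x => Om x i j).

Definition closed_form (Om : two_form) : Prop :=
  forall (i j k : 'I_N) (x : pt),
    partial i (fun y => Om y j k) x + partial j (fun y => Om y k i) x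
    + partial k (fun y => Om y i j) x = 0.

Definition symplectic_form (Om : two_form) : Prop :=
  [/\ skew_form Om, smooth_form Om, closed_form Om & forall x, \det (Om x) != 0].

(* standard form  sum_{i=1}^n dx_{2i-1} /\ dx_{2i}  (1-based), i.e. 0-based
   pairs (2i, 2i+1) *)
Definition Omega_std : two_form := fun _ =>
  \matrix_(i, j) (if ~~ odd i && (j == i.+1 :> nat) then 1
                  else if ~~ odd j && (i == j.+1 :> nat) then -1 else 0).

(* pullback matrix: (phi^* omega)(x)(v,w) = omega(phi x)(dphi v, dphi w) *)
Definition pullback (phi : pt -> pt) (Om : two_form) : two_form :=
  fun x => (jacobian phi x)^T *m Om (phi x) *m jacobian phi x.

Definition symp_std (phi : pt -> pt) : Prop :=
  diffeomorphism phi /\ pullback phi Omega_std = Omega_std.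

Definition std_symplectomorphic (Om1 Om2 : two_form) : Prop :=
  exists phi, symp_std phi /\ pullback phi Om1 = Om2.

(* indices 2i-1, 2i (1-based) = 2i, 2i+1 (0-based) *)
Lemma odd_idx_lt (i : 'I_n) : (i.*2 < N)%N.
Proof. by rewrite ltn_double. Qed.
Lemma even_idx_lt (i : 'I_n) : (i.*2.+1 < N)%N.
Proof. by rewrite -doubleS leq_double. Qed.
Definition idx1 (i : 'I_n) : 'I_N := Ordinal (odd_idx_lt i).
Definition idx2 (i : 'I_n) : 'I_N := Ordinal (even_idx_lt i).

Definition pfaffian (A : 'M[R]_N) : R :=
  ((2 ^+ n * (n`!)%:R)^-1) *
  \sum_(s : 'S_N) (-1) ^+ s * \prod_(i < n) A (s (idx1 i)) (s (idx2 i)).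

Definition sum_fn (A : 'M[R]_N) : R := \sum_(i < n) A (idx1 i) (idx2 i).

End Defs.

From Pilot Require Import Defs.
From HB Require Import structures.
From mathcomp Require Import all_boot all_order all_algebra all_fingroup.
From mathcomp Require Import all_classical all_reals topology normedtype derive.
From mathcomp Require Import zify.
Import Order.TTheory GRing.Theory Num.Theory.
Set Implicit Arguments. Unset Strict Implicit. Unset Printing Implicit Defensive.
Local Open Scope ring_scope.

(* The pullback by a symplectomorphism phi acts pointwise by congruence
   A |-> J^T A J with J the Jacobian, and J^T Om_std J = Om_std.  The Pfaffian
   satisfies Pf(J^T A J) = det J * Pf(A); since Pf(Om_std) > 0 (every nonzero
   term of its defining sum equals 1), taking A = Om_std forces det J = 1, so
   the Pfaffian is preserved.  For skew A, tr(Om_std A) = -2 s(A), and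
   J Om_std J^T = Om_std gives tr(Om_std J^T A J) = tr(J Om_std J^T A) =
   tr(Om_std A), so s is preserved as well. *)

Section PairIndices.
Variable n : nat.
Local Notation N := (n.*2).

Definition pidx (i : 'I_n) (b : bool) : 'I_N := if b then idx2 i else idx1 i.

Lemma idx1E i : idx1 i = pidx i false. Proof. by []. Qed.
Lemma idx2E i : idx2 i = pidx i true. Proof. by []. Qed.

Lemma val_pidx i b : pidx i b = (b + i.*2)%N :> nat.
Proof. by case: b. Qed.

Lemma half_ord_subproof (j : 'I_N) : (j./2 < n)%N.
Proof. by rewrite ltn_half_double. Qed.

Definition half_ord (j : 'I_N) : 'I_n := Ordinal (half_ord_subproof j).

Lemma pidx_half_odd j : pidx (half_ord j) (odd j) = j.
Proof. by apply: val_inj; rewrite /= val_pidx odd_double_half. Qed.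

Lemma half_pidx i b : half_ord (pidx i b) = i.
Proof. by apply: val_inj; rewrite /= val_pidx half_bit_double. Qed.

Lemma odd_pidx i b : odd (pidx i b) = b.
Proof. by rewrite val_pidx oddD odd_double addbF; case: b. Qed.

Lemma half_odd_inj (j k : 'I_N) : half_ord j = half_ord k -> odd j = odd k -> j = k.
Proof. by move=> hjk ojk; rewrite -(pidx_half_odd j) -(pidx_half_odd k) hjk ojk. Qed.

Lemma eq_pidx i b i' b' : (pidx i b == pidx i' b') = (i == i') && (b == b').
Proof.
apply/idP/idP => [/eqP E | /andP[/eqP -> /eqP ->]] //.
move: (congr1 half_ord E) (congr1 (fun j : 'I_N => odd j) E).
by rewrite !half_pidx !odd_pidx => -> ->; rewrite !eqxx.
Qed.

Lemma big_pidx (T : Type) (idx : T) (op : Monoid.com_law idx) (F : 'I_N -> T) :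
  \big[op/idx]_(j : 'I_N) F j =
  \big[op/idx]_(i : 'I_n) op (F (pidx i true)) (F (pidx i false)).
Proof.
rewrite (reindex (fun p : 'I_n * bool => pidx p.1 p.2)) /=; last first.
  exists (fun j => (half_ord j, odd j)) => [[i b] _ | j _] /=.
    by rewrite half_pidx odd_pidx.
  by rewrite pidx_half_odd.
rewrite -(pair_bigA _ (fun i b => F (pidx i b))) /=.
by apply: eq_bigr => i _; rewrite big_bool.
Qed.

End PairIndices.

Section Congruence.
Variable R : comPzRingType.

Lemma congrmx_entry m p (A : 'M[R]_m) (B : 'M[R]_(m, p)) x y :
  (B^T *m A *m B) x y = \sum_(q : 'I_m * 'I_m) B q.1 x * A q.1 q.2 * B q.2 y.
Proof.
rewrite mxE -(pair_bigA _ (fun k l => B k x * A k l * B l y)) /=.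
rewrite [RHS]exchange_big /=; apply: eq_bigr => l _.
by rewrite mxE big_distrl /=; apply: eq_bigr => k _; rewrite mxE.
Qed.

Lemma sum_ffun_det_rowsub k (a : {ffun 'I_k -> 'I_k} -> R) (B : 'M[R]_k) :
  \sum_(g : {ffun 'I_k -> 'I_k}) a g * \det (rowsub g B) =
  \det B * \sum_(s : 'S_k) (-1) ^+ s * a (pval s).
Proof.
rewrite (bigID (fun g : {ffun 'I_k -> 'I_k} => injectiveb g)) /=.
rewrite [X in _ + X]big1 ?addr0 => [|g /injectivePn[j1 [j2 j12 gj12]]]; last first.
  by rewrite (determinant_alternate j12) ?mulr0 // => m; rewrite !mxE gj12.
rewrite (reindex (@pval _)) /=; last first.
  by exists (insubd (1%g : 'S_k)) => f injf; first apply: val_inj; apply: insubdK.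
rewrite big_distrr /=; apply: eq_big => [s | s _]; first by rewrite (valP s).
have -> : rowsub (pval s) B = row_perm s B by apply/matrixP => i j; rewrite !mxE pvalE.
by rewrite row_permE det_mulmx det_perm mulrCA [RHS]mulrCA [a _ * _]mulrC.
Qed.

Variable n : nat.
Local Notation N := (n.*2).

Lemma prod_sum_pairs (F : 'I_n -> 'I_N -> 'I_N -> R) :
  \prod_(i < n) \sum_(q : 'I_N * 'I_N) F i q.1 q.2 =
  \sum_(g : {ffun 'I_N -> 'I_N}) \prod_(i < n) F i (g (idx1 i)) (g (idx2 i)).
Proof.
pose pairs_of (g : {ffun 'I_N -> 'I_N}) := [ffun i => (g (idx1 i), g (idx2 i))].
pose merge (f : {ffun 'I_n -> 'I_N * 'I_N}) : {ffun 'I_N -> 'I_N} :=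
  [ffun j : 'I_N => if odd j then (f (half_ord j)).2 else (f (half_ord j)).1].
rewrite bigA_distr_bigA /= (reindex pairs_of) /=; last first.
  exists merge => [g _ | f _]; apply/ffunP => j; rewrite !ffunE.
    by rewrite -(pidx_half_odd j); case: (odd j); rewrite odd_pidx half_pidx.
  by rewrite idx1E idx2E !odd_pidx !half_pidx; case: (f j).
by apply: eq_bigr => g _; apply: eq_bigr => i _; rewrite ffunE.
Qed.

End Congruence.

Lemma pfaffian_congr (R : realType) n (A B : 'M[R]_(n.*2)) :
  pfaffian (B^T *m A *m B) = \det B * pfaffian A.
Proof.
rewrite /pfaffian mulrCA; congr (_ * _).
pose a (g : {ffun 'I_n.*2 -> 'I_n.*2}) := \prod_(i < n) A (g (idx1 i)) (g (idx2 i)).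
transitivity (\sum_(g : {ffun 'I_n.*2 -> 'I_n.*2}) a g * \det (rowsub g B)); last first.
  by rewrite sum_ffun_det_rowsub; congr (_ * _); apply: eq_bigr => s _; rewrite /a !pvalE.
under eq_bigr => s _.
  rewrite (eq_bigr _ (fun i _ => congrmx_entry A B (s (idx1 i)) (s (idx2 i)))).
  rewrite (prod_sum_pairs (fun i k l => B k (s (idx1 i)) * A k l * B l (s (idx2 i)))).
  rewrite big_distrr /=.
over.
rewrite exchange_big /=; apply: eq_bigr => g _.
rewrite /determinant big_distrr /=; apply: eq_bigr => s _; rewrite mulrCA; congr (_ * _).
rewrite /a (big_pidx _ (fun j => rowsub g B j (s j))) -big_split /=.
apply: eq_bigr => i _; rewrite !mxE idx1E idx2E.
by rewrite mulrC [B _ (s (pidx i false)) * _]mulrC mulrCA.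
Qed.

Section PairPermutations.
Variable n : nat.
Local Notation N := (n.*2).

Definition pair_perm_fun (s : 'S_n) (c : 'I_n -> bool) (j : 'I_N) : 'I_N :=
  pidx (s (half_ord j)) (odd j (+) c (half_ord j)).

Lemma pair_perm_fun_inj s c : injective (pair_perm_fun s c).
Proof.
move=> j k /eqP; rewrite eq_pidx => /andP[/eqP/perm_inj hjk /eqP].
by rewrite hjk => /addIb ojk; apply: half_odd_inj.
Qed.

Definition pair_perm s c : 'S_N := perm (@pair_perm_fun_inj s c).

Lemma pair_permE s c i b : pair_perm s c (pidx i b) = pidx (s i) (b (+) c i).
Proof. by rewrite permE /pair_perm_fun half_pidx odd_pidx. Qed.

Local Notation no_flip := (fun _ : 'I_n => false).

Lemma pair_perm_split s c : pair_perm s c = (pair_perm 1 c * pair_perm s no_flip)%g.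
Proof.
by apply/permP => j; rewrite -(pidx_half_odd j) permM !pair_permE perm1 addbF.
Qed.

Lemma pair_permM s1 s2 :
  pair_perm (s1 * s2) no_flip = (pair_perm s1 no_flip * pair_perm s2 no_flip)%g.
Proof.
by apply/permP => j; rewrite -(pidx_half_odd j) permM !pair_permE permM !addbF.
Qed.

Lemma pair_perm1 : pair_perm 1 no_flip = 1%g.
Proof. by apply/permP => j; rewrite -(pidx_half_odd j) pair_permE !perm1 addbF. Qed.

Lemma pair_perm_tperm a b : pair_perm (tperm a b) no_flip =
  (tperm (pidx a false) (pidx b false) * tperm (pidx a true) (pidx b true))%g.
Proof.
have pidx_inj (c : bool) : injective (fun i : 'I_n => pidx i c).
  by move=> x y /eqP; rewrite eq_pidx eqxx andbT => /eqP.
apply/permP => j; rewrite -(pidx_half_odd j) permM pair_permE addbF.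
case: (odd j).
  rewrite [tperm _ _ (pidx _ true)]tpermD ?eq_pidx ?andbF //.
  exact: (inj_tperm _ _ _ (pidx_inj true)).
by rewrite -(inj_tperm _ _ _ (pidx_inj false)) [RHS]tpermD // eq_pidx andbF.
Qed.

Lemma odd_pair_perm_no_flip s : odd_perm (pair_perm s no_flip) = false.
Proof.
have [ts -> _] := prod_tpermP s; elim: ts => [|t ts IHts].
  by rewrite big_nil pair_perm1 odd_perm1.
rewrite big_cons pair_permM odd_permM IHts pair_perm_tperm odd_permM.
by rewrite !odd_tperm !eq_pidx !andbT addbb.
Qed.

Lemma odd_pair_perm_flips (S : {set 'I_n}) :
  odd_perm (pair_perm 1 (fun i => i \in S)) = odd #|S|.
Proof.
move: {2}#|S| (erefl #|S|) => m; elim: m S => [|m IHm] S cardS.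
  move/eqP: cardS; rewrite cards_eq0 => /eqP ->; rewrite cards0.
  rewrite (_ : pair_perm 1 _ = 1%g) ?odd_perm1 //.
  by apply/permP => j; rewrite -(pidx_half_odd j) pair_permE inE !perm1 addbF.
have /set0Pn[i Si] : S != finset.set0 by rewrite -card_gt0 cardS.
have cardSi : #|S :\ i| = m by move: cardS; rewrite (cardsD1 i) Si => -[].
have -> : pair_perm 1 (fun j => j \in S) =
    (pair_perm 1 (fun j => j \in S :\ i) * tperm (pidx i false) (pidx i true))%g.
  apply/permP => j; rewrite -(pidx_half_odd j) permM !pair_permE !perm1.
  have [->|ne_ji] := eqVneq (half_ord j) i.
    by rewrite setD11 Si addbF addbT; case: (odd j); rewrite ?tpermR ?tpermL.
  by rewrite in_setD1 ne_ji tpermD // eq_pidx eq_sym (negbTE ne_ji).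
by rewrite odd_permM IHm // odd_tperm eq_pidx eqxx /= cardS cardSi /= addbT.
Qed.

Lemma odd_pair_perm s c : odd_perm (pair_perm s c) = odd #|[set i | c i]|.
Proof.
rewrite pair_perm_split odd_permM odd_pair_perm_no_flip addbF.
rewrite -odd_pair_perm_flips; congr (odd_perm (pair_perm 1 _)).
by apply: boolp.funext => i; rewrite inE.
Qed.

End PairPermutations.

Section StandardForm.
Variables (R : realType) (n : nat).
Local Notation N := (n.*2).
Local Notation Om := (@Omega_std R n 0).

Lemma Omega_std_pidx i b i' b' :
  Om (pidx i b) (pidx i' b') =
  if i == i' then (if b == b' then 0 else if b then -1 else 1) else 0.
Proof.
rewrite /Omega_std mxE !val_pidx !oddD !odd_double !addbF.
rewrite (_ : (i == i') = (i == i' :> nat)) //.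
case: b; case: b' => /=; rewrite ?add0n ?add1n ?eqSS.
all: by repeat (case: ifP => /= ?); try lia.
Qed.

Lemma Omega_std_neq0 j k : Om j k != 0 -> half_ord k = half_ord j /\ odd k = ~~ odd j.
Proof.
rewrite -(pidx_half_odd j) -(pidx_half_odd k) Omega_std_pidx !half_pidx !odd_pidx.
case: (eqVneq (half_ord j) (half_ord k)) => [->|]; last by rewrite eqxx.
by case: (odd j); case: (odd k); rewrite ?eqxx.
Qed.

Lemma Omega_std_row_sum i b (F : 'I_N -> R) :
  \sum_k Om (pidx i b) k * F k = (if b then -1 else 1) * F (pidx i (~~ b)).
Proof.
rewrite (bigD1 (pidx i (~~ b))) //= big1 => [|k ne_k].
  by rewrite Omega_std_pidx eqxx addr0; case: b.
rewrite -(pidx_half_odd k) Omega_std_pidx; case: eqP => [E|]; last by rewrite mul0r.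
case: eqP => [_|]; first by rewrite mul0r.
move: ne_k; rewrite -{1}(pidx_half_odd k) -E eq_pidx eqxx /=.
by case: b; case: (odd k).
Qed.

Lemma Omega_std_sqr : Om *m Om = - 1%:M.
Proof.
apply/matrixP => j k; rewrite !mxE -(pidx_half_odd j) -(pidx_half_odd k).
rewrite Omega_std_row_sum Omega_std_pidx eq_pidx.
case: (half_ord j == half_ord k); case: (odd j); case: (odd k) => /=.
all: by rewrite ?mulr0 ?mulr1 ?mulN1r ?oppr0 ?mul1r ?mulr1n ?mulr0n ?oppr0.
Qed.

Lemma mxtrace_Omega_std_skew (A : 'M[R]_N) :
  A^T = - A -> \tr (Om *m A) = - (sum_fn A *+ 2).
Proof.
move=> skewA; rewrite /mxtrace (big_pidx _ (fun j => (Om *m A) j j)) /sum_fn.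
rewrite -sumrMnl -sumrN; apply: eq_bigr => i _.
rewrite !mxE (Omega_std_row_sum i true (fun j => A j (idx2 i))).
rewrite (Omega_std_row_sum i false (fun j => A j (idx1 i))) /= mulN1r mul1r.
have -> : A (idx2 i) (idx1 i) = - A (idx1 i) (idx2 i).
  by have := congr1 (fun B : 'M[R]_N => B (idx1 i) (idx2 i)) skewA; rewrite !mxE.
by rewrite mulr2n opprD.
Qed.

Lemma pair_perm_of_Omega_std_term (s : 'S_N) :
  (forall i, Om (s (idx1 i)) (s (idx2 i)) != 0) ->
  exists s' c, s = pair_perm s' c.
Proof.
move=> nz; have Hs i := Omega_std_neq0 (nz i).
pose sf i := half_ord (s (idx1 i)).
have sf_inj : injective sf.
  move=> i1 i2 Esf; rewrite /sf in Esf.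
  case: (eqVneq (odd (s (idx1 i1))) (odd (s (idx1 i2)))) => [O|O].
    move/perm_inj/eqP: (half_odd_inj Esf O).
    by rewrite !idx1E eq_pidx => /andP[/eqP].
  have E' : half_ord (s (idx1 i1)) = half_ord (s (idx2 i2)) by rewrite Esf (Hs i2).1.
  have O' : odd (s (idx1 i1)) = odd (s (idx2 i2)).
    by rewrite (Hs i2).2; move: O; case: (odd _); case: (odd _).
  move/perm_inj/eqP: (half_odd_inj E' O').
  by rewrite idx1E idx2E eq_pidx andbF.
exists (perm sf_inj), (fun i => odd (s (idx1 i))).
apply/permP => j; rewrite -(pidx_half_odd j) pair_permE permE /sf.
case: (odd j) => /=; last by rewrite pidx_half_odd.
by apply: half_odd_inj; rewrite ?half_pidx ?odd_pidx ?(Hs _).1 ?(Hs _).2.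
Qed.

Lemma prod_Omega_std_pair_perm s c :
  \prod_(i < n) Om (pair_perm s c (idx1 i)) (pair_perm s c (idx2 i)) =
  (-1) ^+ #|[set i | c i]|.
Proof.
rewrite cardsE -prodr_const [RHS]big_mkcond /=; apply: eq_bigr => i _.
by rewrite idx1E idx2E !pair_permE Omega_std_pidx eqxx unfold_in; case: (c i).
Qed.

Lemma Omega_std_term_ge0 (s : 'S_N) :
  0 <= (-1) ^+ s * \prod_(i < n) Om (s (idx1 i)) (s (idx2 i)).
Proof.
have [->|/prodf_neq0 nz] := eqVneq (\prod_(i < n) Om (s (idx1 i)) (s (idx2 i))) 0.
  by rewrite mulr0.
have [s' [c ->]] := pair_perm_of_Omega_std_term (fun i => nz i isT).
by rewrite odd_pair_perm prod_Omega_std_pair_perm signr_odd -expr2 sqrr_sign ler01.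
Qed.

Lemma pfaffian_Omega_std_gt0 : 0 < pfaffian Om.
Proof.
apply: mulr_gt0; first by rewrite invr_gt0 mulr_gt0 ?exprn_gt0 ?ltr0n ?fact_gt0.
rewrite (bigD1 1%g) //= odd_perm1 expr0 mul1r big1 => [|i _]; last first.
  by rewrite !perm1 idx1E idx2E Omega_std_pidx eqxx.
by rewrite ltr_pwDl ?ltr01 // sumr_ge0 // => s _; apply: Omega_std_term_ge0.
Qed.

Variable J : 'M[R]_N.
Hypothesis sympJ : J^T *m Om *m J = Om.

Lemma det_symplectic : \det J = 1.
Proof.
have Pf_neq0 : pfaffian Om != 0 := lt0r_neq0 pfaffian_Omega_std_gt0.
by apply: (mulIf Pf_neq0); rewrite mul1r -pfaffian_congr sympJ.
Qed.

Lemma symplectic_trmx : J *m Om *m J^T = Om.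
Proof.
have JinvJ : (- (Om *m J^T *m Om)) *m J = 1%:M.
  by rewrite mulNmx -!mulmxA [J^T *m (Om *m J)]mulmxA sympJ Omega_std_sqr opprK.
have : J *m - (Om *m J^T *m Om) *m Om = Om by rewrite (mulmx1C JinvJ) mul1mx.
by rewrite mulmxN mulNmx -!mulmxA Omega_std_sqr mulmxN mulmx1 !mulmxN opprK !mulmxA.
Qed.

Lemma sum_fn_symplectic_congr (A : 'M[R]_N) :
  A^T = - A -> sum_fn (J^T *m A *m J) = sum_fn A.
Proof.
move=> skewA; have skewJAJ : (J^T *m A *m J)^T = - (J^T *m A *m J).
  by rewrite !trmx_mul trmxK skewA mulNmx mulmxN mulmxA.
have : \tr (Om *m (J^T *m A *m J)) = \tr (Om *m A).
  by rewrite !mulmxA mxtrace_mulC !mulmxA symplectic_trmx.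
rewrite !mxtrace_Omega_std_skew // => /oppr_inj /eqP.
by rewrite -subr_eq0 -mulrnBl mulrn_eq0 /= subr_eq0 => /eqP.
Qed.

End StandardForm.

Theorem theorem2p4 (R : realType) (n : nat) (Om1 Om2 : two_form R n) :
  symplectic_form Om1 -> symplectic_form Om2 ->
  std_symplectomorphic Om1 Om2 ->
  exists phi : 'rV[R]_(n.*2) -> 'rV[R]_(n.*2),
    symp_std phi /\
    forall x : 'rV[R]_(n.*2),
      pfaffian (Om1 (phi x)) = pfaffian (Om2 x) /\
      sum_fn (Om1 (phi x)) = sum_fn (Om2 x).
Proof.
move=> [skew1 _ _ _] _ [phi [symp_phi <-]].
exists phi; split=> // x; rewrite /pullback.
(* Omega_std ignores its point, so its values at phi x and x are Omega_std 0. *)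
have sympJ : (Defs.jacobian phi x)^T *m @Omega_std R n 0 *m Defs.jacobian phi x =
             Omega_std 0.
  exact: (congr1 (fun Om => Om x) symp_phi.2).
by rewrite pfaffian_congr det_symplectic // mul1r sum_fn_symplectic_congr.
Qed.
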